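(* Let $\mathcal{C}$ be a monoidal category and $\mathcal{D}$ a non-strict monoidal category, let $F,G:\mathcal{C}\to\mathcal{D}$ be strong monoidal functors and let $\widehat{F},\widehat{G}:\mathcal{C}_q\to\mathcal{D}$ be the unique strict monoidal functors with $\widehat{F}\circ j=F$ and $\widehat{G}\circ j=G$. For every monoidal natural transformation $\alpha:F\Rightarrow G$ there exists a unique monoidal natural transformation $\widehat{\alpha}:\widehat{F}\Rightarrow\widehat{G}$ such that $\widehat{\alpha}\, j=\alpha$ (i.e. $\widehat{\alpha}_{((X),\bullet)}=\alpha_X$ for all $X$).
   Context: $\mathrm{Mag}(\bullet)$ is the free unital magma on one generator $\bullet$; $|t|$ is the number of bullets. Non-strictification $\mathcal{C}_q$ of $(\mathcal{C},\otimes,\mathbf{1},a,\ell,r)$: objects are pairs $(S,t)$, $S$ a finite sequence of objects of $\mathcal{C}$, $t\in\mathrm{Mag}(\bullet)$, $|t|=$ length of $S$. $\mathrm{Par}(\emptyset,\emptyset)=\mathbf{1}$, $\mathrm{Par}((X),\bullet)=X$, and for $|t|>1$, $t=t_1t_2$ uniquely with $|t_k|\ge1$, $S=S_1*S_2$ with $S_k$ of length $|t_k|$, $\mathrm{Par}(S,t)=\mathrm{Par}(S_1,t_1)\otimes\mathrm{Par}(S_2,t_2)$. $\mathrm{Hom}_{\mathcal{C}_q}((S,t),(S',t'))=\mathrm{Hom}_{\mathcal{C}}(\mathrm{Par}(S,t),\mathrm{Par}(S',t'))$. Monoidal structure: $(S,t)*(S',t')=(S*S',tt')$, unit $(\emptyset,\emptyset)$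 (strict), $f*g:=f\otimes g$ for nonempty factors, identity unit constraints, associativity constraint $a_q$ with $\mathrm{Par}(a_q)=a_{\mathrm{Par}(S,t),\mathrm{Par}(S',t'),\mathrm{Par}(S'',t'')}$. The embedding $j(X)=((X),\bullet)$ is strong monoidal with constraints corresponding to identities. A natural transformation $\alpha:F\Rightarrow G$ between monoidal functors $(F,\gamma,u)$, $(G,\gamma',u')$ is monoidal if $\alpha_{\mathbf{1}}\circ u=u'$ and $\alpha_{X\otimes Y}\circ\gamma_{X,Y}=\gamma'_{X,Y}\circ(\alpha_X\boxtimes\alpha_Y)$. *)

Set Implicit Arguments.
Unset Strict Implicit.

Record Category := {
  ob : Type;
  hom : ob -> ob -> Type;
  comp : forall a b c, hom b c -> hom a b -> hom a c;
  idm : forall a, hom a a;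
  comp_id_l : forall a b (f : hom a b), comp (idm b) f = f;
  comp_id_r : forall a b (f : hom a b), comp f (idm a) = f;
  comp_assoc : forall a b c d (f : hom c d) (g : hom b c) (h : hom a b),
      comp f (comp g h) = comp (comp f g) h }.
Arguments hom {_} _ _.
Arguments comp {_ _ _ _} _ _.
Arguments idm {_} _.
Notation "g ∘ f" := (comp g f) (at level 40, left associativity).

Definition id_of_eq (C : Category) (a b : ob C) (e : a = b) : hom a b :=
  match e in _ = y return hom a y with eq_refl => idm a end.

Record MonData (C : Category) := {
  tens : ob C -> ob C -> ob C;
  tensm : forall a b c d, hom a c -> hom b d -> hom (tens a b) (tens c d);
  munit : ob C;
  assoc : forall a b c, hom (tens (tens a b) c) (tens a (tens b c));
  assoc_inv : forall a b c, hom (tens a (tens b c)) (tens (tens a b) c);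
  lunit : forall a, hom (tens munit a) a;
  lunit_inv : forall a, hom a (tens munit a);
  runit : forall a, hom (tens a munit) a;
  runit_inv : forall a, hom a (tens a munit) }.
Arguments tensm {_} _ {_ _ _ _} _ _.

Record IsMonoidal (C : Category) (M : MonData C) : Prop := {
  tensm_id : forall a b, tensm M (idm a) (idm b) = idm (tens M a b);
  tensm_comp : forall a b c a' b' c' (f : hom a b) (g : hom b c)
      (f' : hom a' b') (g' : hom b' c'),
      tensm M (g ∘ f) (g' ∘ f') = tensm M g g' ∘ tensm M f f';
  assoc_nat : forall a b c a' b' c' (f : hom a a') (g : hom b b') (h : hom c c'),
      assoc M a' b' c' ∘ tensm M (tensm M f g) h
      = tensm M f (tensm M g h) ∘ assoc M a b c;
  lunit_nat : forall a b (f : hom a b),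
      lunit M b ∘ tensm M (idm (munit M)) f = f ∘ lunit M a;
  runit_nat : forall a b (f : hom a b),
      runit M b ∘ tensm M f (idm (munit M)) = f ∘ runit M a;
  assoc_iso1 : forall a b c, assoc_inv M a b c ∘ assoc M a b c = idm _;
  assoc_iso2 : forall a b c, assoc M a b c ∘ assoc_inv M a b c = idm _;
  lunit_iso1 : forall a, lunit_inv M a ∘ lunit M a = idm _;
  lunit_iso2 : forall a, lunit M a ∘ lunit_inv M a = idm _;
  runit_iso1 : forall a, runit_inv M a ∘ runit M a = idm _;
  runit_iso2 : forall a, runit M a ∘ runit_inv M a = idm _;
  pentagon : forall a b c d,
      assoc M a b (tens M c d) ∘ assoc M (tens M a b) c d
      = tensm M (idm a) (assoc M b c d) ∘ assoc M a (tens M b c) d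
        ∘ tensm M (assoc M a b c) (idm d);
  triangle : forall a b,
      tensm M (idm a) (lunit M b) ∘ assoc M a (munit M) b
      = tensm M (runit M a) (idm b) }.

Record MonCat := {
  mcat :> Category;
  mdata : MonData mcat;
  mlaws : IsMonoidal mdata }.

(* An object (S,t) with t in Mag(•) and |t| = length S is encoded as an element
   of the free unital magma on the objects of C: either the empty word (None)
   or a nonempty binary tree whose leaves, read left to right, form S. *)
Inductive ltree (T : Type) := Leaf (x : T) | Node (l r : ltree T).
Arguments Leaf {T} x.
Arguments Node {T} l r.

Definition qob (C : Category) := option (ltree (ob C)).

Fixpoint ParT (C : Category) (M : MonData C) (t : ltree (ob C)) : ob C :=
  match t with
  | Leaf x => x
  | Node l r => tens M (ParT M l) (ParT M r)
  end.

Definition Par (C : Category) (M : MonData C) (A : qob C) : ob C :=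
  match A with None => munit M | Some t => ParT M t end.

Definition qtens (T : Type) (A B : option (ltree T)) : option (ltree T) :=
  match A with
  | None => B
  | Some a => match B with None => Some a | Some b => Some (Node a b) end
  end.

Section Cq.
Variable C : MonCat.
Let M := mdata C.

Definition qphi (A B : qob C) : hom (tens M (Par M A) (Par M B)) (Par M (qtens A B)) :=
  match A as A0 return hom (tens M (Par M A0) (Par M B)) (Par M (qtens A0 B)) with
  | None => lunit M (Par M B)
  | Some a =>
    match B as B0 return hom (tens M (ParT M a) (Par M B0)) (Par M (qtens (Some a) B0)) with
    | None => runit M (ParT M a)
    | Some b => idm _
    end
  end.

Definition qphi_inv (A B : qob C) : hom (Par M (qtens A B)) (tens M (Par M A) (Par M B)) :=
  match A as A0 return hom (Par M (qtens A0 B)) (tens M (Par M A0) (Par M B)) with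
  | None => lunit_inv M (Par M B)
  | Some a =>
    match B as B0 return hom (Par M (qtens (Some a) B0)) (tens M (ParT M a) (Par M B0)) with
    | None => runit_inv M (ParT M a)
    | Some b => idm _
    end
  end.

Definition Cq : Category.
Proof.
  refine {| ob := qob C;
            hom := fun A B => @hom C (Par M A) (Par M B);
            comp := fun a b c g f => g ∘ f;
            idm := fun a => idm (Par M a) |}.
  - intros; apply comp_id_l.
  - intros; apply comp_id_r.
  - intros; apply comp_assoc.
Defined.

Definition qrunit (A : qob C) : @hom C (Par M (qtens A None)) (Par M A) :=
  match A as A0 return @hom C (Par M (qtens A0 None)) (Par M A0) with
  | None => idm _ | Some a => idm _ end.

Definition qrunit_inv (A : qob C) : @hom C (Par M A) (Par M (qtens A None)) :=
  match A as A0 return @hom C (Par M A0) (Par M (qtens A0 None)) with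
  | None => idm _ | Some a => idm _ end.

(* monoidal structure of C_q: f*g is f⊗g for nonempty factors (conjugated by
   the unit constraints of C otherwise), strict unit with identity unit
   constraints, and Par(a_q) = a_{Par A, Par B, Par C} for nonempty factors *)
Definition CqData : MonData Cq :=
  @Build_MonData Cq
     (@qtens (ob C))
     (fun A B A' B' (f : @hom C (Par M A) (Par M A'))
                             (g : @hom C (Par M B) (Par M B')) =>
        qphi A' B' ∘ tensm M f g ∘ qphi_inv A B)
     None
     (fun A B D =>
        qphi A (qtens B D) ∘ tensm M (idm (Par M A)) (qphi B D)
        ∘ assoc M (Par M A) (Par M B) (Par M D)
        ∘ tensm M (qphi_inv A B) (idm (Par M D)) ∘ qphi_inv (qtens A B) D)
     (fun A B D =>
        qphi (qtens A B) D ∘ tensm M (qphi A B) (idm (Par M D))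
        ∘ assoc_inv M (Par M A) (Par M B) (Par M D)
        ∘ tensm M (idm (Par M A)) (qphi_inv B D) ∘ qphi_inv A (qtens B D))
     (fun A => idm (Par M A))
     (fun A => idm (Par M A))
     qrunit
     qrunit_inv.

(* the embedding j : C -> C_q on objects; on morphisms j f = f *)
Definition jq (X : ob C) : ob Cq := Some (Leaf X).

End Cq.

Record Functor (C D : Category) := {
  fob : ob C -> ob D;
  fmap : forall a b, hom a b -> hom (fob a) (fob b);
  fmap_id : forall a, fmap (idm a) = idm (fob a);
  fmap_comp : forall a b c (g : hom b c) (f : hom a b),
      fmap (g ∘ f) = fmap g ∘ fmap f }.
Arguments fob {_ _} _ _.
Arguments fmap {_ _} _ {_ _} _.

Record MonFunctor (C : Category) (MC : MonData C) (D : Category) (MD : MonData D) := {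
  mfun :> Functor C D;
  mgam : forall a b, hom (tens MD (fob mfun a) (fob mfun b)) (fob mfun (tens MC a b));
  mu : hom (munit MD) (fob mfun (munit MC));
  mgam_nat : forall a b a' b' (f : hom a a') (g : hom b b'),
      fmap mfun (tensm MC f g) ∘ mgam a b = mgam a' b' ∘ tensm MD (fmap mfun f) (fmap mfun g);
  mf_assoc : forall a b c,
      fmap mfun (assoc MC a b c) ∘ mgam (tens MC a b) c ∘ tensm MD (mgam a b) (idm _)
      = mgam a (tens MC b c) ∘ tensm MD (idm _) (mgam b c)
        ∘ assoc MD (fob mfun a) (fob mfun b) (fob mfun c);
  mf_lunit : forall a,
      fmap mfun (lunit MC a) ∘ mgam (munit MC) a ∘ tensm MD mu (idm _)
      = lunit MD (fob mfun a);
  mf_runit : forall a,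
      fmap mfun (runit MC a) ∘ mgam a (munit MC) ∘ tensm MD (idm _) mu
      = runit MD (fob mfun a) }.
Arguments mgam {_ _ _ _} _ _ _.
Arguments mu {_ _ _ _} _.

Definition is_iso (C : Category) (a b : ob C) (f : hom a b) : Prop :=
  exists g : hom b a, g ∘ f = idm a /\ f ∘ g = idm b.

Definition strong C MC D MD (F : @MonFunctor C MC D MD) : Prop :=
  (forall a b, is_iso (mgam F a b)) /\ is_iso (mu F).

Definition strict C MC D MD (F : @MonFunctor C MC D MD) : Prop :=
  (forall a b, exists e : tens MD (fob F a) (fob F b) = fob F (tens MC a b),
      mgam F a b = id_of_eq e) /\
  (exists e : munit MD = fob F (munit MC), mu F = id_of_eq e).

Definition is_mon_nat C MC D MD (F G : @MonFunctor C MC D MD)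
    (al : forall X, hom (fob F X) (fob G X)) : Prop :=
  (forall X Y (f : hom X Y), al Y ∘ fmap F f = fmap G f ∘ al X) /\
  al (munit MC) ∘ mu F = mu G /\
  (forall X Y, al (tens MC X Y) ∘ mgam F X Y = mgam G X Y ∘ tensm MD (al X) (al Y)).

(* Fh ∘ j = F as monoidal functors, the equality of objects Fh (j X) = F X
   being witnessed by e (morphisms and constraints agree after transport).
   The constraints of j are identities, so those of Fh ∘ j are
   Fh(id) ∘ gamma^Fh_{jX,jY} and Fh(id) ∘ u^Fh. *)
Definition restricts (C D : MonCat) (Fh : MonFunctor (CqData C) (mdata D))
    (F : MonFunctor (mdata C) (mdata D)) (e : forall X, fob Fh (jq X) = fob F X) : Prop :=
  (forall (X Y : ob C) (f : hom X Y),
      fmap Fh (a := jq X) (b := jq Y) f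
      = id_of_eq (eq_sym (e Y)) ∘ fmap F f ∘ id_of_eq (e X)) /\
  (forall X Y : ob C,
      fmap Fh (a := qtens (jq X) (jq Y)) (b := jq (tens (mdata C) X Y))
           (idm (tens (mdata C) X Y)) ∘ mgam Fh (jq X) (jq Y)
      = id_of_eq (eq_sym (e (tens (mdata C) X Y))) ∘ mgam F X Y
        ∘ tensm (mdata D) (id_of_eq (e X)) (id_of_eq (e Y))) /\
  (fmap Fh (a := None) (b := jq (munit (mdata C))) (idm (munit (mdata C))) ∘ mu Fh
      = id_of_eq (eq_sym (e (munit (mdata C)))) ∘ mu F).
Arguments restricts {C D} Fh F e.
Arguments is_mon_nat {C MC D MD} F G al.
Arguments strong {C MC D MD} F.
Arguments strict {C MC D MD} F.
Arguments jq {C} X.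


(* Every object A of C_q is isomorphic to j (Par A) through the identity of Par A, read in
   either direction.  Hence a natural transformation given on the image of j extends
   uniquely to C_q by conjugation with these isomorphisms,
     alpha_hat A = Gh(id) ∘ alpha (Par A) ∘ Fh(id),
   and the monoidality square of alpha_hat at (A, B) is conjugate to the one at
   (j (Par A), j (Par B)).  There it is the monoidality of alpha, since the restrictions of
   Fh and Gh along j recover the constraints of F and G. *)

Set Implicit Arguments.
Unset Strict Implicit.

Section CategoryFacts.
Variable K : Category.

Lemma id_of_eqK (a b : ob K) (e : a = b) : id_of_eq e ∘ id_of_eq (eq_sym e) = idm b.
Proof. destruct e; apply comp_id_l. Qed.

Lemma comp_congr_tail (a b c d : ob K) (x : hom c d) (g : hom b c) (f : hom a b) (h : hom a c) :
  g ∘ f = h -> x ∘ g ∘ f = x ∘ h.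
Proof. intros E; rewrite <- comp_assoc, E; reflexivity. Qed.

End CategoryFacts.

Lemma fmap_retract (K L : Category) (H : Functor K L) (a b : ob K) (u : hom a b) (u' : hom b a) :
  u' ∘ u = idm a -> fmap H u' ∘ fmap H u = idm (fob H a).
Proof. intros E; rewrite <- (fmap_comp H), E; apply fmap_id. Qed.

Section NaturalFamilies.
Variables (K L : Category) (H1 H2 : Functor K L).

Lemma nat_retract (a : forall A, hom (fob H1 A) (fob H2 A))
    (a_nat : forall A B (f : hom A B), a B ∘ fmap H1 f = fmap H2 f ∘ a A)
    A A' (u : hom A A') (u' : hom A' A) :
  u' ∘ u = idm A -> a A = fmap H2 u' ∘ a A' ∘ fmap H1 u.
Proof.
  intros E. rewrite <- comp_assoc, a_nat, comp_assoc, (fmap_retract H2 E), comp_id_l.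
  reflexivity.
Qed.

Variables (I : Type) (j : I -> ob K) (p : ob K -> I)
  (r : forall A, hom A (j (p A))) (r' : forall A, hom (j (p A)) A).
Hypothesis r'_r : forall A, r' A ∘ r A = idm A.
Variable b : forall i, hom (fob H1 (j i)) (fob H2 (j i)).
Hypothesis b_nat : forall i i' (f : hom (j i) (j i')), b i' ∘ fmap H1 f = fmap H2 f ∘ b i.

Definition nat_ext (A : ob K) : hom (fob H1 A) (fob H2 A) :=
  fmap H2 (r' A) ∘ b (p A) ∘ fmap H1 (r A).

Lemma nat_ext_nat A B (f : hom A B) : nat_ext B ∘ fmap H1 f = fmap H2 f ∘ nat_ext A.
Proof.
  unfold nat_ext.
  assert (Ef : r B ∘ f = (r B ∘ f ∘ r' A) ∘ r A)
    by (rewrite <- comp_assoc, r'_r, comp_id_r; reflexivity).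
  assert (Ef' : r' B ∘ (r B ∘ f ∘ r' A) = f ∘ r' A)
    by (rewrite !comp_assoc, r'_r, comp_id_l; reflexivity).
  rewrite <- comp_assoc, <- (fmap_comp H1), Ef, (fmap_comp H1), comp_assoc.
  rewrite (comp_congr_tail _ (b_nat _)), !comp_assoc, <- (fmap_comp H2), Ef', (fmap_comp H2).
  reflexivity.
Qed.

Lemma nat_ext_j i : nat_ext (j i) = b i.
Proof.
  unfold nat_ext. rewrite <- comp_assoc, b_nat, comp_assoc, (fmap_retract H2 (r'_r _)), comp_id_l.
  reflexivity.
Qed.

Lemma nat_ext_unique (c : forall A, hom (fob H1 A) (fob H2 A))
    (c_nat : forall A B (f : hom A B), c B ∘ fmap H1 f = fmap H2 f ∘ c A) :
  (forall i, c (j i) = b i) -> forall A, c A = nat_ext A.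
Proof. intros cj A. rewrite (nat_retract c_nat (r'_r A)), cj. reflexivity. Qed.

End NaturalFamilies.

Section MonoidalSquare.
Variables (K : Category) (MK : MonData K) (L : MonCat) (H1 H2 : MonFunctor MK (mdata L))
  (a : forall A, hom (fob H1 A) (fob H2 A)).
Hypothesis a_nat : forall A B (f : hom A B), a B ∘ fmap H1 f = fmap H2 f ∘ a A.

Definition mon_square (A B : ob K) : Prop :=
  a (tens MK A B) ∘ mgam H1 A B = mgam H2 A B ∘ tensm (mdata L) (a A) (a B).

Lemma mon_square_retract A B A' B' (u : hom A A') (u' : hom A' A) (v : hom B B') (v' : hom B' B) :
  u' ∘ u = idm A -> v' ∘ v = idm B -> tensm MK u' v' ∘ tensm MK u v = idm _ ->
  mon_square A' B' -> mon_square A B.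
Proof.
  unfold mon_square. intros Eu Ev Euv Sq.
  rewrite (nat_retract a_nat Eu), (nat_retract a_nat Ev), !(tensm_comp (mlaws L)), !comp_assoc.
  rewrite <- (mgam_nat H2), (comp_congr_tail _ (eq_sym Sq)), comp_assoc.
  rewrite (comp_congr_tail _ (eq_sym (mgam_nat H1 u v))), !comp_assoc, <- a_nat.
  rewrite <- (comp_assoc (a _)), (fmap_retract H1 Euv), comp_id_r.
  reflexivity.
Qed.

End MonoidalSquare.

Section NonStrictification.
Variable C : MonCat.
Local Notation M := (mdata C).

Lemma qphi_invK (A B : qob C) : qphi_inv A B ∘ qphi A B = idm _.
Proof.
  destruct A as [a|]; [destruct B as [b|]|]; simpl.
  - apply comp_id_l.
  - apply (runit_iso1 (mlaws C)).
  - apply (lunit_iso1 (mlaws C)).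
Qed.

Lemma qphiK (A B : qob C) : qphi A B ∘ qphi_inv A B = idm _.
Proof.
  destruct A as [a|]; [destruct B as [b|]|]; simpl.
  - apply comp_id_l.
  - apply (runit_iso2 (mlaws C)).
  - apply (lunit_iso2 (mlaws C)).
Qed.

Lemma Cq_tensm_comp (A1 A2 A3 B1 B2 B3 : ob (Cq C)) (f : hom A1 A2) (g : hom A2 A3)
    (f' : hom B1 B2) (g' : hom B2 B3) :
  tensm (CqData C) (g ∘ f) (g' ∘ f') = tensm (CqData C) g g' ∘ tensm (CqData C) f f'.
Proof.
  simpl. rewrite (tensm_comp (mlaws C)), !comp_assoc, (comp_congr_tail _ (qphi_invK A2 B2)).
  rewrite comp_id_r. reflexivity.
Qed.

Lemma Cq_tensm_id (A B : ob (Cq C)) :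
  tensm (CqData C) (idm A) (idm B) = idm (tens (CqData C) A B).
Proof. simpl. rewrite (tensm_id (mlaws C)), comp_id_r. apply qphiK. Qed.

Definition to_jq (A : ob (Cq C)) : hom A (jq (Par M A)) := idm (Par M A).
Definition of_jq (A : ob (Cq C)) : hom (jq (Par M A)) A := idm (Par M A).

Lemma of_jqK (A : ob (Cq C)) : of_jq A ∘ to_jq A = idm A.
Proof. exact (comp_id_l (idm (Par M A))). Qed.

Lemma tensm_of_jqK (A B : ob (Cq C)) :
  tensm (CqData C) (of_jq A) (of_jq B) ∘ tensm (CqData C) (to_jq A) (to_jq B) = idm _.
Proof. rewrite <- Cq_tensm_comp, !of_jqK. apply Cq_tensm_id. Qed.

End NonStrictification.

Section Restriction.
Variables (C D : MonCat) (H : MonFunctor (CqData C) (mdata D)) (F : MonFunctor (mdata C) (mdata D))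
  (e : forall X, fob H (jq X) = fob F X).
Hypothesis rH : restricts H F e.

Lemma restricts_mgam (X Y : ob C) :
  mgam H (jq X) (jq Y) ∘ tensm (mdata D) (id_of_eq (eq_sym (e X))) (id_of_eq (eq_sym (e Y)))
  = fmap H (of_jq (qtens (jq X) (jq Y))) ∘ id_of_eq (eq_sym (e (tens (mdata C) X Y))) ∘ mgam F X Y.
Proof.
  destruct rH as [_ [rH_mgam _]].
  assert (Eto : fmap H (to_jq (qtens (jq X) (jq Y))) ∘ mgam H (jq X) (jq Y)
    = id_of_eq (eq_sym (e (tens (mdata C) X Y))) ∘ mgam F X Y
      ∘ tensm (mdata D) (id_of_eq (e X)) (id_of_eq (e Y))) by exact (rH_mgam X Y).
  transitivity (fmap H (of_jq (qtens (jq X) (jq Y)))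
    ∘ (fmap H (to_jq (qtens (jq X) (jq Y))) ∘ mgam H (jq X) (jq Y))
    ∘ tensm (mdata D) (id_of_eq (eq_sym (e X))) (id_of_eq (eq_sym (e Y)))).
  { rewrite comp_assoc, (fmap_retract H (of_jqK _)), comp_id_l. reflexivity. }
  rewrite Eto, !comp_assoc, <- comp_assoc, <- (tensm_comp (mlaws D)), !id_of_eqK.
  rewrite (tensm_id (mlaws D)), comp_id_r. reflexivity.
Qed.

Lemma restricts_mu :
  mu H = fmap H (of_jq None) ∘ id_of_eq (eq_sym (e (munit (mdata C)))) ∘ mu F.
Proof.
  destruct rH as [_ [_ rH_mu]].
  assert (Eto : fmap H (to_jq None) ∘ mu H = id_of_eq (eq_sym (e (munit (mdata C)))) ∘ mu F)
    by exact rH_mu.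
  transitivity (fmap H (of_jq None) ∘ (fmap H (to_jq None) ∘ mu H)).
  { rewrite comp_assoc, (fmap_retract H (of_jqK _)), comp_id_l. reflexivity. }
  rewrite Eto. apply comp_assoc.
Qed.

End Restriction.

Section Extension.
Variables (C D : MonCat) (F G : MonFunctor (mdata C) (mdata D))
  (Fh Gh : MonFunctor (CqData C) (mdata D))
  (eF : forall X, fob Fh (jq X) = fob F X) (eG : forall X, fob Gh (jq X) = fob G X).
Hypotheses (rF : restricts Fh F eF) (rG : restricts Gh G eG).
Variable alpha : forall X, hom (fob F X) (fob G X).
Hypothesis alpha_mon : is_mon_nat F G alpha.

Definition alpha_j (X : ob C) : hom (fob Fh (jq X)) (fob Gh (jq X)) :=
  id_of_eq (eq_sym (eG X)) ∘ alpha X ∘ id_of_eq (eF X).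

Lemma alpha_j_nat X Y (f : hom (jq X) (jq Y)) : alpha_j Y ∘ fmap Fh f = fmap Gh f ∘ alpha_j X.
Proof.
  destruct rF as [rF_fmap _], rG as [rG_fmap _], alpha_mon as [alpha_nat _].
  unfold alpha_j. rewrite (rF_fmap X Y f), (rG_fmap X Y f), !comp_assoc.
  rewrite (comp_congr_tail _ (id_of_eqK (eF Y))), comp_id_r.
  rewrite (comp_congr_tail _ (id_of_eqK (eG X))), comp_id_r.
  rewrite (comp_congr_tail _ (alpha_nat X Y f)), !comp_assoc.
  reflexivity.
Qed.

Definition alpha_hat : forall A : ob (Cq C), hom (fob Fh A) (fob Gh A) :=
  nat_ext (H1 := Fh) (H2 := Gh) (j := @jq C) (p := Par (mdata C)) (@to_jq C) (@of_jq C) alpha_j.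

Lemma alpha_hat_nat A B (f : hom A B) : alpha_hat B ∘ fmap Fh f = fmap Gh f ∘ alpha_hat A.
Proof. exact (nat_ext_nat (@of_jqK C) alpha_j_nat f). Qed.

Lemma alpha_hat_j X : alpha_hat (jq X) = alpha_j X.
Proof. exact (nat_ext_j (@of_jqK C) alpha_j_nat X). Qed.

Lemma alpha_hat_unit : alpha_hat None ∘ mu Fh = mu Gh.
Proof.
  destruct rF as [_ [_ rF_mu]], alpha_mon as [_ [alpha_mu _]].
  assert (EtoF : fmap Fh (to_jq None) ∘ mu Fh
    = id_of_eq (eq_sym (eF (munit (mdata C)))) ∘ mu F) by exact rF_mu.
  rewrite (restricts_mu rG). unfold alpha_hat, nat_ext, alpha_j.
  rewrite !comp_assoc, (comp_congr_tail _ EtoF), comp_assoc.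
  rewrite (comp_congr_tail _ (id_of_eqK _)), comp_id_r, (comp_congr_tail _ alpha_mu).
  reflexivity.
Qed.

Lemma alpha_hat_mon_square_j (P Q : ob C) : mon_square alpha_hat (jq P) (jq Q).
Proof.
  destruct rF as [_ [rF_mgam _]], alpha_mon as [_ [_ alpha_tens]].
  assert (EtoF : fmap Fh (to_jq (qtens (jq P) (jq Q))) ∘ mgam Fh (jq P) (jq Q)
    = id_of_eq (eq_sym (eF (tens (mdata C) P Q))) ∘ mgam F P Q
      ∘ tensm (mdata D) (id_of_eq (eF P)) (id_of_eq (eF Q))) by exact (rF_mgam P Q).
  unfold mon_square. rewrite !alpha_hat_j. unfold alpha_j.
  rewrite !(tensm_comp (mlaws D)), !comp_assoc, (restricts_mgam rG P Q).
  unfold alpha_hat, nat_ext, alpha_j.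
  change (Par (mdata C) (tens (CqData C) (jq P) (jq Q))) with (tens (mdata C) P Q).
  change (tens (CqData C) (jq P) (jq Q)) with (qtens (jq P) (jq Q)).
  rewrite !comp_assoc, (comp_congr_tail _ EtoF), !comp_assoc.
  rewrite (comp_congr_tail _ (id_of_eqK _)), comp_id_r, (comp_congr_tail _ (alpha_tens P Q)).
  rewrite !comp_assoc. reflexivity.
Qed.

Lemma alpha_hat_mon_square (A B : ob (Cq C)) : mon_square alpha_hat A B.
Proof.
  exact (mon_square_retract alpha_hat_nat (of_jqK A) (of_jqK B) (tensm_of_jqK A B)
           (alpha_hat_mon_square_j _ _)).
Qed.

End Extension.

Theorem mainTheorem8 (C D : MonCat)
  (F G : MonFunctor (mdata C) (mdata D))
  (Fh Gh : MonFunctor (CqData C) (mdata D))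
  (eF : forall X : ob C, fob Fh (jq X) = fob F X)
  (eG : forall X : ob C, fob Gh (jq X) = fob G X) :
  strong F -> strong G -> strict Fh -> strict Gh ->
  restricts Fh F eF -> restricts Gh G eG ->
  forall alpha : forall X : ob C, hom (fob F X) (fob G X),
  is_mon_nat F G alpha ->
  exists ah : forall A : ob (Cq C), hom (fob Fh A) (fob Gh A),
    is_mon_nat Fh Gh ah /\
    (forall X : ob C, ah (jq X) = id_of_eq (eq_sym (eG X)) ∘ alpha X ∘ id_of_eq (eF X)) /\
    (forall bh : forall A : ob (Cq C), hom (fob Fh A) (fob Gh A),
       is_mon_nat Fh Gh bh ->
       (forall X : ob C, bh (jq X) = id_of_eq (eq_sym (eG X)) ∘ alpha X ∘ id_of_eq (eF X)) ->
       forall A, bh A = ah A).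
Proof.
  intros _ _ _ _ rF rG alpha alpha_mon.
  exists (alpha_hat eF eG alpha).
  split; [split; [|split] | split].
  - exact (alpha_hat_nat rF rG alpha_mon).
  - exact (alpha_hat_unit rF rG alpha_mon).
  - exact (alpha_hat_mon_square rF rG alpha_mon).
  - exact (alpha_hat_j rF rG alpha_mon).
  - intros bh [bh_nat _] bh_j.
    exact (nat_ext_unique (@of_jqK C) bh_nat bh_j).
Qed.
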